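(* Let $d_1,d_2,d_3,r_1,r_2$ be positive integers with $r_1<d_1d_2$ and $r_2\le d_2d_3$. Let $\mathrm{GQSAT}_3$ denote $\mathrm{GQSAT}$ of the following instance: - three qudits of dimensions $d_1,d_2,d_3$; - two hyperedges $\{1,2\}$ and $\{2,3\}$ with ranks $r_1$ and $r_2$. Let $(G_3,c)$ be the following tensor network template: - two inputs $s_1,s_2$ and two outputs $t_1,t_2$; - two vertices $x,y$; - edges with capacities: - $s_1$–$x$, capacity $d_1d_2-r_1$; - $x$–$t_1$, capacity $d_1$; - $x$–$y$, capacity $d_2$; - $s_2$–$y$, capacity $d_3$; - $y$–$t_2$, capacity $r_2$. Then $\mathrm{GQSAT}_3=d_3(d_1d_2-r_1)-\mathrm{QMF}(G_3,c)$.
   Context: A tensor network template $(G,c)$ consists of a finite undirected graph $G$ with edge set $E$ whose vertex set is partitioned as $S\sqcup T\sqcup V$. Every element of $S$ (inputs) and every element of $T$ (outputs) is an open end of degree $1$; the elements of $V$ are called vertices. For $u\in S\sqcup T$, $e(u)$ denotes the edge incident to $u$. A capacity function $c:E\to\mathbb{Z}_{>0}$ is given, and to each edge $e$ one associates $\mathbb{C}^{c_e}$ with a fixed basis. At each vertex $v$ of degree $d_v$ an ordering $e(v,1),\dots,e(v,d_v)$ of the incident edge-ends is fixed. A tensor assignment $\mathcal T=(\mathcal T_v)_{v\in V}$ chooses $\mathcal T_v\in\bigotimes_{i=1}^{d_v}\mathbb{C}^{c_{e(v,i)}}$ for each $v$. Let $V_S=\bigotimes_{u\in S}\mathbb{C}^{c_{e(u)}}$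 and $V_T=\bigotimes_{u\in T}\mathbb{C}^{c_{e(u)}}$. Contracting the network along all edges gives $\beta(G,c;\mathcal T)\in\mathrm{Hom}(V_S,V_T)$, whose matrix entries are $\langle I_T|\beta|I_S\rangle=\sum_W\prod_{v\in V}(\mathcal T_v)_{W|_v}$. Here $W$ ranges over all assignments of basis indices to all edges that agree with $I_S$ on the input edges and with $I_T$ on the output edges, and $W|_v$ is the tuple of indices on $e(v,1),\dots,e(v,d_v)$. The quantum max-flow is $\mathrm{QMF}(G,c)=\max_{\mathcal T}\operatorname{rank}\beta(G,c;\mathcal T)$. $\mathrm{GQSAT}$: an instance consists of $n$ qudits with dimensions $d_1,\dots,d_n$, a set of hyperedges $e\subseteq\{1,\dots,n\}$, and a rank $r_e$ for each hyperedge. For orthogonal projectors $\Pi_e$ of rank $r_e$ on $\bigotimes_{v\in e}\mathbb{C}^{d_v}$, set $H=\sum_e\Pi_e\otimes I_{\{1,\dots,n\}\setminus e}$ acting on $\bigotimes_{v=1}^n\mathbb{C}^{d_v}$. Then $\mathrm{GQSAT}$ of the instance is the minimum of $\dim\ker H$ over all such choices of projectors. This minimum equals the value of $\dim\ker H$ for a generic choice of projectors. *)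

From HB Require Import structures.
From mathcomp Require Import all_boot all_order all_algebra.
Set Implicit Arguments. Unset Strict Implicit. Unset Printing Implicit Defensive.
Import Order.TTheory GRing.Theory Num.Theory.
Local Open Scope ring_scope.

(* Decoding of a tensor-product basis index k of C^m (x) C^n into (i, j),
   lexicographic order (k = i * n + j), the inverse of mxvec_index. *)
Definition unpair (m n : nat) (k : 'I_(m * n)) : 'I_m * 'I_n :=
  enum_val (cast_ord (esym (mxvec_cast m n)) k).

Definition kron (C : nzRingType) (m1 n1 m2 n2 : nat)
  (A : 'M[C]_(m1, n1)) (B : 'M[C]_(m2, n2)) : 'M[C]_(m1 * m2, n1 * n2) :=
  \matrix_(i, j) (A (unpair i).1 (unpair j).1 * B (unpair i).2 (unpair j).2).

Definition adjmx (C : numClosedFieldType) (m n : nat) (A : 'M[C]_(m, n)) :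
  'M[C]_(n, m) := (map_mx Num.conj A)^T.

Definition orth_projector (C : numClosedFieldType) (n : nat) (P : 'M[C]_n)
  (r : nat) : Prop :=
  P *m P = P /\ adjmx P = P /\ \rank P = r.

Definition is_min (P : nat -> Prop) (n : nat) : Prop :=
  P n /\ forall m, P m -> (n <= m)%N.
Definition is_max (P : nat -> Prop) (n : nat) : Prop :=
  P n /\ forall m, P m -> (m <= n)%N.

(* GQSAT instance: qudits of dims d1,d2,d3; hyperedges {1,2} (rank r1) and
   {2,3} (rank r2).  H = Pi1 (x) I_3 + I_1 (x) Pi2 on C^(d1*d2*d3). *)
Definition H3 (C : numClosedFieldType) (d1 d2 d3 : nat)
  (P1 : 'M[C]_(d1 * d2)) (P2 : 'M[C]_(d2 * d3)) : 'M[C]_(d1 * d2 * d3) :=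
  kron P1 (1%:M : 'M[C]_d3)
  + castmx (mulnA d1 d2 d3, mulnA d1 d2 d3) (kron (1%:M : 'M[C]_d1) P2).

Definition GQSAT3_values (C : numClosedFieldType) (d1 d2 d3 r1 r2 : nat)
  (k : nat) : Prop :=
  exists (P1 : 'M[C]_(d1 * d2)) (P2 : 'M[C]_(d2 * d3)),
    orth_projector P1 r1 /\ orth_projector P2 r2 /\
    \rank (kermx (H3 P1 P2)) = k.

(* Tensor network template G3: inputs s1, s2; outputs t1, t2; vertices x, y.
   Edges: e1 = s1-x (cap d1*d2-r1), e2 = x-t1 (cap d1), e3 = x-y (cap d2),
   e4 = s2-y (cap d3), e5 = y-t2 (cap r2).
   Edge-end orderings: at x (e1,e2,e3), at y (e3,e4,e5).
   V_S = C^(d1*d2-r1) (x) C^d3 (order s1,s2), V_T = C^d1 (x) C^r2 (order t1,t2).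
   <I_T | beta | I_S> = sum over the index on e3 of Tx(..) * Ty(..). *)
Definition beta3 (C : numClosedFieldType) (d1 d2 d3 r1 r2 : nat)
  (Tx : 'I_(d1 * d2 - r1) -> 'I_d1 -> 'I_d2 -> C)
  (Ty : 'I_d2 -> 'I_d3 -> 'I_r2 -> C) : 'M[C]_(d1 * r2, (d1 * d2 - r1) * d3) :=
  \matrix_(I, J) \sum_(k < d2)
     (Tx (unpair J).1 (unpair I).1 k * Ty k (unpair J).2 (unpair I).2).

Definition QMF3_values (C : numClosedFieldType) (d1 d2 d3 r1 r2 : nat)
  (k : nat) : Prop :=
  exists (Tx : 'I_(d1 * d2 - r1) -> 'I_d1 -> 'I_d2 -> C)
         (Ty : 'I_d2 -> 'I_d3 -> 'I_r2 -> C),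
    \rank (beta3 Tx Ty) = k.

(* Write Q1 = P1 (x) 1 and Q2 = 1 (x) P2, both orthogonal projectors, so that
   H = Q1 + Q2 and ker H = ker Q1 :&: ker Q2 (a sum of Gram matrices vanishes
   only if each term does).  If the a = d1 d2 - r1 rows of A span ker P1, then
   the rows of X = A (x) 1 form a basis of ker Q1; if the r2 columns of B span
   the image of P2, then Y = 1 (x) B has ker Y = ker Q2.  Hence
   dim ker H = dim (X :&: ker Y) = a d3 - rank (X Y), and X Y is the transpose
   of the network map whose vertex tensors are A and B reshaped.  Conversely
   every pair of vertex tensors arises from matrices A, B whose row (resp.
   column) spaces lie in ker P1 (resp. the image of P2) for projectors of the
   prescribed ranks, and rank (X Y) can only grow when A, B are enlarged to such
   bases.  So the minimal kernel dimension and the maximal network rank add up to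
   a d3. *)

From HB Require Import structures.
From mathcomp Require Import all_boot all_order all_algebra.
From mathcomp Require Import mxtens zify.
From Stdlib Require Import Classical.
Import Order.TTheory GRing.Theory Num.Theory.

Set Implicit Arguments. Unset Strict Implicit. Unset Printing Implicit Defensive.
Local Open Scope ring_scope.

Lemma index_allpairs (T1 T2 : eqType) (s1 : seq T1) (s2 : seq T2) x y :
  x \in s1 -> y \in s2 ->
  index (x, y) [seq (x1, x2) | x1 <- s1, x2 <- s2] = (index x s1 * size s2 + index y s2)%N.
Proof.
move=> xs1 ys2; elim: s1 xs1 => //= x1 s1 IHs1.
rewrite inE index_cat; case: (eqVneq x1 x) => [->|ne_x1x] /= xs1.
  by rewrite mem_map ?ys2 ?index_map // => u v [].
have /negbTE -> : (x, y) \notin [seq (x1, x2) | x2 <- s2].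
  by apply/mapP => -[z _ [e _]]; rewrite e eqxx in ne_x1x.
by rewrite IHs1 // size_map mulSn addnA.
Qed.

Lemma mxvec_indexE m n (i : 'I_m) (j : 'I_n) : mxvec_index i j = mxtens_index (i, j).
Proof.
have rank_index : val (enum_rank (i, j)) = index (i, j) (enum {: 'I_m * 'I_n}).
  by rewrite -{2}(nth_enum_rank (i, j) (i, j)) index_uniq ?enum_uniq // -cardE.
apply: val_inj => /=; rewrite rank_index.
by rewrite enumT unlock /= index_allpairs ?mem_enum // !index_enum_ord size_enum_ord.
Qed.

Lemma unpairE m n (k : 'I_(m * n)) : unpair k = mxtens_unindex k.
Proof.
by case: (mxtens_indexP k) => i j; rewrite mxtens_indexK -mxvec_indexE /unpair cast_ordK enum_rankK.
Qed.

Lemma kron_tensmx (R : nzRingType) m1 n1 m2 n2 (A : 'M[R]_(m1, n1)) (B : 'M[R]_(m2, n2)) :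
  kron A B = A *t B.
Proof. by apply/matrixP => i j; rewrite !mxE !unpairE. Qed.

Lemma sum_mxtens_index (V : nmodType) m n (F : 'I_(m * n) -> V) :
  \sum_(k < m * n) F k = \sum_(i < m) \sum_(j < n) F (mxtens_index (i, j)).
Proof.
rewrite pair_big /=; apply: reindex.
by exists (@mxtens_unindex m n) => [[i j] _ | k _]; rewrite (mxtens_indexK, mxtens_unindexK).
Qed.

Lemma tens1mx (R : pzRingType) m n : (1%:M : 'M[R]_m) *t (1%:M : 'M[R]_n) = 1%:M.
Proof.
apply/matrixP => k l; case: (mxtens_indexP k) => i j; case: (mxtens_indexP l) => i' j'.
by rewrite tensmxE !mxE -natrM mulnb (inj_eq (can_inj (@mxtens_indexK m n))) xpair_eqE.
Qed.

Lemma tensmxBl (R : pzRingType) m1 n1 m2 n2 (A A' : 'M[R]_(m1, n1)) (B : 'M[R]_(m2, n2)) :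
  (A - A') *t B = A *t B - A' *t B.
Proof. by apply/matrixP => i j; rewrite !mxE mulrBl. Qed.

Section TensorSpaces.
Variable F : fieldType.

Lemma submx_tensr m1 m1' n1 m2 n2 (A : 'M[F]_(m1, n1)) (A' : 'M[F]_(m1', n1))
    (B : 'M[F]_(m2, n2)) :
  (A <= A')%MS -> (A *t B <= A' *t B)%MS.
Proof.
by case/submxP=> D ->; apply/submxP; exists (D *t 1%:M); rewrite tensmx_mul mul1mx.
Qed.

Lemma eqmx_tensr m1 m1' n1 m2 n2 (A : 'M[F]_(m1, n1)) (A' : 'M[F]_(m1', n1))
    (B : 'M[F]_(m2, n2)) :
  (A :=: A')%MS -> (A *t B :=: A' *t B)%MS.
Proof. by move=> eqAA'; apply/eqmxP; rewrite !submx_tensr ?eqAA'. Qed.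

Lemma row_free_tensmx m1 n1 m2 n2 (A : 'M[F]_(m1, n1)) (B : 'M[F]_(m2, n2)) :
  row_free A -> row_free B -> row_free (A *t B).
Proof.
case/row_freeP=> A' AA'; case/row_freeP=> B' BB'; apply/row_freeP.
by exists (A' *t B'); rewrite tensmx_mul AA' BB' tens1mx.
Qed.

Lemma kermx_idem n (P : 'M[F]_n) : P *m P = P -> (kermx P :=: 1%:M - P)%MS.
Proof.
move=> PP; apply/eqmxP/andP; split.
  have -> : kermx P = kermx P *m (1%:M - P).
    by rewrite mulmxBr mulmx_ker mulmx1 subr0.
  exact: submxMl.
by apply/sub_kermxP; rewrite mulmxBl mul1mx PP subrr.
Qed.

Lemma kermx_tensmx1 n p (P : 'M[F]_n) :
  P *m P = P -> (kermx (P *t (1%:M : 'M_p)) :=: kermx P *t 1%:M)%MS.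
Proof.
move=> PP; have PPt : (P *t 1%:M) *m (P *t 1%:M) = P *t (1%:M : 'M_p).
  by rewrite tensmx_mul PP mulmx1.
apply: eqmx_trans (kermx_idem PPt) _.
by rewrite -[X in X - _]tens1mx -tensmxBl; apply/eqmx_sym/eqmx_tensr/kermx_idem.
Qed.

Lemma kermx_mulr m n p (A : 'M[F]_(m, n)) (B : 'M[F]_(n, p)) :
  (kermx A <= kermx (A *m B))%MS.
Proof. by apply/sub_kermxP; rewrite mulmxA mulmx_ker mul0mx. Qed.

End TensorSpaces.

Section Adjoint.
Variable C : numClosedFieldType.

Lemma adjmx_mul m n p (A : 'M[C]_(m, n)) (B : 'M[C]_(n, p)) :
  adjmx (A *m B) = adjmx B *m adjmx A.
Proof. by rewrite /adjmx map_mxM trmx_mul. Qed.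

Lemma adjmxK m n (A : 'M[C]_(m, n)) : adjmx (adjmx A) = A.
Proof. by apply/matrixP => i j; rewrite !mxE conjCK. Qed.

Lemma adjmx1 n : adjmx (1%:M : 'M[C]_n) = 1%:M.
Proof. by rewrite /adjmx map_mx1 trmx1. Qed.

Lemma adjmxB m n (A B : 'M[C]_(m, n)) : adjmx (A - B) = adjmx A - adjmx B.
Proof. by rewrite /adjmx map_mxB linearB. Qed.

Lemma adjmx_tr m n (A : 'M[C]_(m, n)) : adjmx A^T = (adjmx A)^T.
Proof. by rewrite /adjmx -map_trmx. Qed.

Lemma adjmx_inv n (A : 'M[C]_n) : adjmx (invmx A) = invmx (adjmx A).
Proof. by rewrite /adjmx map_invmx trmx_inv. Qed.

Lemma adjmx_cast m m' n n' (eq_m : m = m') (eq_n : n = n') (A : 'M[C]_(m, n)) :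
  adjmx (castmx (eq_m, eq_n) A) = castmx (eq_n, eq_m) (adjmx A).
Proof. by case: m' / eq_m; case: n' / eq_n; rewrite !castmx_id. Qed.

Lemma adjmx_tensmx m1 n1 m2 n2 (A : 'M[C]_(m1, n1)) (B : 'M[C]_(m2, n2)) :
  adjmx (A *t B) = adjmx A *t adjmx B.
Proof. by rewrite /adjmx map_mxT trmx_tens. Qed.

Lemma gram_add_eq0 m n n' (M : 'M[C]_(m, n)) (N : 'M[C]_(m, n')) :
  M *m adjmx M + N *m adjmx N = 0 -> M = 0.
Proof.
move=> gram0; apply/matrixP => i j; have /eqP := congr1 (fun G : 'M_m => G i i) gram0.
have gram_ge0 p (K : 'M[C]_(m, p)) k : 0 <= K i k * adjmx K k i.
  by rewrite !mxE mul_conjC_ge0.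
rewrite !mxE paddr_eq0 ?sumr_ge0 // => /andP[/eqP/psumr_eq0P Mi0 _].
have := Mi0 (fun k _ => gram_ge0 _ M k) j isT.
by rewrite !mxE => /eqP; rewrite mul_conjC_eq0 => /eqP.
Qed.

Lemma gram_unit k n (U : 'M[C]_(k, n)) :
  row_free U -> U *m adjmx U \in unitmx.
Proof.
move=> freeU; rewrite -row_free_unit -kermx_eq0; apply/eqP.
set K := kermx _; have KU0 : K *m U *m adjmx (K *m U) + 0 *m adjmx (0 : 'M_(k, n)) = 0.
  by rewrite mul0mx addr0 adjmx_mul mulmxA -(mulmxA K) mulmx_ker mul0mx.
by apply/eqP; rewrite -(mulmx_free_eq0 _ freeU) (gram_add_eq0 KU0).
Qed.

End Adjoint.

Section Projectors.
Variable C : numClosedFieldType.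

Definition selfadjoint_idem n (Q : 'M[C]_n) := Q *m Q = Q /\ adjmx Q = Q.

Lemma orth_projector_idem n r (P : 'M[C]_n) : orth_projector P r -> selfadjoint_idem P.
Proof. by case=> PP [adjP _]. Qed.

Lemma kermx_add_selfadjoint_idem n (Q1 Q2 : 'M[C]_n) :
  selfadjoint_idem Q1 -> selfadjoint_idem Q2 ->
  (kermx (Q1 + Q2) :=: kermx Q1 :&: kermx Q2)%MS.
Proof.
move=> [Q1Q1 adjQ1] [Q2Q2 adjQ2]; apply/eqmxP/andP; split; last first.
  by apply/sub_kermxP; rewrite mulmxDr !(sub_kermxP _) ?capmxSl ?capmxSr ?addr0.
set K := kermx _.
have gram_idem Q : Q *m Q = Q -> adjmx Q = Q -> K *m Q *m adjmx (K *m Q) = K *m Q *m adjmx K.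
  by move=> QQ adjQ; rewrite adjmx_mul adjQ mulmxA -(mulmxA K) QQ.
have gram0 : K *m Q1 *m adjmx (K *m Q1) + K *m Q2 *m adjmx (K *m Q2) = 0.
  by rewrite !gram_idem // -mulmxDl -mulmxDr mulmx_ker mul0mx.
rewrite sub_capmx !sub_kermx (gram_add_eq0 gram0).
by rewrite addrC in gram0; rewrite (gram_add_eq0 gram0) eqxx.
Qed.

Lemma orth_projector_compl n r (P : 'M[C]_n) :
  orth_projector P r -> orth_projector (1%:M - P) (n - r).
Proof.
case=> PP [adjP rkP]; split; [|split].
- by rewrite mulmxBl !mulmxBr !mul1mx PP mulmx1 subrr subr0.
- by rewrite adjmxB adjmx1 adjP.
by rewrite -(kermx_idem PP) mxrank_ker rkP.
Qed.

Lemma orth_projector_tr n r (P : 'M[C]_n) : orth_projector P r -> orth_projector P^T r.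
Proof.
case=> PP [adjP rkP]; split; [|split].
- by rewrite -trmx_mul PP.
- by rewrite adjmx_tr adjP.
by rewrite mxrank_tr.
Qed.

Lemma orth_projector_sup m n k (M : 'M[C]_(m, n)) :
  (\rank M <= k <= n)%N -> exists2 P : 'M[C]_n, orth_projector P k & (M <= P)%MS.
Proof.
case/andP=> rkMk le_kn; set U : 'M[C]_(k, n) := pid_mx k *m row_ebase M.
have rkU : \rank U = k by rewrite mxrankMfree ?rank_pid_mx ?row_free_unit ?row_ebase_unit.
have MU : (M <= U)%MS.
  apply/submxP; exists (col_ebase M *m pid_mx (\rank M)).
  rewrite mulmxA -(mulmxA (col_ebase M)) mul_pid_mx.
  by rewrite (minn_idPl rkMk) (minn_idPr rkMk) mulmx_ebase.
clearbody U; have unitG : U *m adjmx U \in unitmx by apply: gram_unit; rewrite /row_free rkU.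
set P := adjmx U *m invmx (U *m adjmx U) *m U.
have UP : U *m P = U by rewrite /P !mulmxA mulmxV // mul1mx.
have eqPU : (P :=: U)%MS by apply/eqmxP; rewrite submxMl -{1}UP submxMl.
exists P; last by rewrite eqPU.
split; [|split]; last by rewrite eqPU.
- by rewrite {1}/P -mulmxA UP.
by rewrite /P !adjmx_mul adjmxK adjmx_inv adjmx_mul adjmxK mulmxA.
Qed.

End Projectors.

Lemma row_basis (F : fieldType) m n r (X : 'M[F]_(m, n)) :
  \rank X = r -> exists2 A : 'M[F]_(r, n), (A :=: X)%MS & row_free A.
Proof.
move=> rkX; have eqAX : (castmx (rkX, erefl) (row_base X) :=: X)%MS.
  exact: eqmx_trans (eqmx_cast _ _) (eq_row_base X).
by exists (castmx (rkX, erefl) (row_base X)); rewrite // /row_free eqAX rkX.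
Qed.

Lemma col_basis (F : fieldType) m n r (X : 'M[F]_(m, n)) :
  \rank X = r ->
  exists (B : 'M[F]_(m, r)) (W : 'M[F]_(r, n)) (Z : 'M[F]_(n, r)), X = B *m W /\ B = X *m Z.
Proof.
rewrite -mxrank_tr => /row_basis[A eqAX _].
have /submxP[W' eW'] : (X^T <= A)%MS by rewrite eqAX.
have /submxP[Z' eZ'] : (A <= X^T)%MS by rewrite eqAX.
exists A^T, W'^T, Z'^T; split; first by rewrite -[X]trmxK eW' trmx_mul.
by rewrite eZ' trmx_mul trmxK.
Qed.

Lemma castmx_mulmx (R : pzRingType) m m' n n' p p' (eq_m : m = m') (eq_n : n = n')
    (eq_p : p = p') (A : 'M[R]_(m, n)) (B : 'M[R]_(n, p)) :
  castmx (eq_m, eq_p) (A *m B) = castmx (eq_m, eq_n) A *m castmx (eq_n, eq_p) B.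
Proof. by case: m' / eq_m; case: n' / eq_n; case: p' / eq_p; rewrite !castmx_id. Qed.

Lemma cast_mxtens_indexA m n p (i : 'I_m) (k : 'I_n) (j : 'I_p) :
  cast_ord (esym (mulnA m n p)) (mxtens_index (mxtens_index (i, k), j))
  = mxtens_index (i, mxtens_index (k, j)).
Proof. by apply: val_inj; rewrite /= mulnDl -mulnA addnA. Qed.

Section Network.
Variables (C : numClosedFieldType) (d1 d2 d3 : nat).

Definition idtens q (B : 'M[C]_(d2 * d3, q)) : 'M[C]_(d1 * d2 * d3, d1 * q) :=
  castmx (mulnA d1 d2 d3, erefl) (1%:M *t B).

Definition idtens_sq (P : 'M[C]_(d2 * d3)) : 'M[C]_(d1 * d2 * d3) :=
  castmx (mulnA d1 d2 d3, mulnA d1 d2 d3) (1%:M *t P).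

Definition contract_mx p q (A : 'M[C]_(p, d1 * d2)) (B : 'M[C]_(d2 * d3, q)) :=
  (A *t (1%:M : 'M_d3)) *m idtens B.

Lemma idtens_mulr q q' (B : 'M[C]_(d2 * d3, q)) (Z : 'M[C]_(q, q')) :
  idtens (B *m Z) = idtens B *m (1%:M *t Z).
Proof.
by rewrite /idtens -(castmx_id (erefl, erefl) (1%:M *t Z)) -castmx_mulmx tensmx_mul mulmx1.
Qed.

Lemma idtensE q (B : 'M[C]_(d2 * d3, q)) i k j i' t :
  idtens B (mxtens_index (mxtens_index (i, k), j)) (mxtens_index (i', t))
  = (i == i')%:R * B (mxtens_index (k, j)) t.
Proof. by rewrite castmxE cast_ord_id cast_mxtens_indexA tensmxE mxE. Qed.

Lemma H3E (P1 : 'M[C]_(d1 * d2)) (P2 : 'M[C]_(d2 * d3)) :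
  H3 P1 P2 = P1 *t 1%:M + idtens_sq P2.
Proof. by rewrite /H3 !kron_tensmx. Qed.

Lemma selfadjoint_idem_tensmx1 (P : 'M[C]_(d1 * d2)) :
  selfadjoint_idem P -> selfadjoint_idem (P *t (1%:M : 'M_d3)).
Proof.
by case=> PP adjP; rewrite /selfadjoint_idem tensmx_mul PP mulmx1 adjmx_tensmx adjP adjmx1.
Qed.

Lemma selfadjoint_idem_idtens_sq P : selfadjoint_idem P -> selfadjoint_idem (idtens_sq P).
Proof.
case=> PP adjP; rewrite /selfadjoint_idem /idtens_sq adjmx_cast adjmx_tensmx adjP adjmx1.
by rewrite -castmx_mulmx tensmx_mul PP mulmx1.
Qed.

Lemma kermx_idtens q (B : 'M[C]_(d2 * d3, q)) P W Z :
  P = B *m W -> B = P *m Z -> (kermx (idtens B) :=: kermx (idtens_sq P))%MS.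
Proof.
move=> eP eB; apply/eqmxP/andP; split.
  rewrite /idtens_sq eP -[1%:M : 'M_d1]mulmx1 -tensmx_mul (castmx_mulmx _ erefl).
  exact: kermx_mulr.
rewrite /idtens eB -[1%:M : 'M_d1]mulmx1 -tensmx_mul (castmx_mulmx _ (mulnA d1 d2 d3)).
exact: kermx_mulr.
Qed.

Lemma rank_contract_add_ker p q (A : 'M[C]_(p, d1 * d2)) (B : 'M[C]_(d2 * d3, q))
    P1 P2 W Z :
  selfadjoint_idem P1 -> selfadjoint_idem P2 -> (A :=: kermx P1)%MS -> row_free A ->
  P2 = B *m W -> B = P2 *m Z ->
  (\rank (contract_mx A B) + \rank (kermx (H3 P1 P2)))%N = (p * d3)%N.
Proof.
move=> saP1 saP2 eqA freeA eP2 eB.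
have freeX : row_free (A *t (1%:M : 'M_d3)) by rewrite row_free_tensmx ?row_free_unit ?unitmx1.
have eqX : (A *t (1%:M : 'M_d3) :=: kermx (P1 *t 1%:M))%MS.
  by apply: eqmx_trans (eqmx_tensr _ eqA) _; apply/eqmx_sym/kermx_tensmx1; case: saP1.
rewrite H3E (kermx_add_selfadjoint_idem (selfadjoint_idem_tensmx1 saP1)
                                        (selfadjoint_idem_idtens_sq saP2)).
by rewrite -(cap_eqmx eqX (kermx_idtens eP2 eB)) mxrank_mul_ker; apply/eqP.
Qed.

Lemma rank_contract_mono p p' q q' (A : 'M[C]_(p, d1 * d2)) (A' : 'M[C]_(p', d1 * d2))
    (B : 'M[C]_(d2 * d3, q)) (B' : 'M[C]_(d2 * d3, q')) Z :
  (A <= A')%MS -> B = B' *m Z -> (\rank (contract_mx A B) <= \rank (contract_mx A' B'))%N.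
Proof.
case/submxP=> D -> ->; rewrite /contract_mx idtens_mulr.
have -> : (D *m A') *t (1%:M : 'M_d3) = (D *t 1%:M) *m (A' *t 1%:M) by rewrite tensmx_mul mulmx1.
by rewrite mulmxA -(mulmxA (D *t _)) (leq_trans (mxrankM_maxl _ _)) ?mxrankM_maxr.
Qed.

Definition xmx p (Tx : 'I_p -> 'I_d1 -> 'I_d2 -> C) : 'M[C]_(p, d1 * d2) :=
  \matrix_(s, l) Tx s (mxtens_unindex l).1 (mxtens_unindex l).2.

Definition ymx q (Ty : 'I_d2 -> 'I_d3 -> 'I_q -> C) : 'M[C]_(d2 * d3, q) :=
  \matrix_(l, t) Ty (mxtens_unindex l).1 (mxtens_unindex l).2 t.

Lemma xmx_onto p (A : 'M[C]_(p, d1 * d2)) : exists Tx, xmx Tx = A.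
Proof.
exists (fun s i k => A s (mxtens_index (i, k))); apply/matrixP => s l.
by case: (mxtens_indexP l) => i k; rewrite mxE mxtens_indexK.
Qed.

Lemma ymx_onto q (B : 'M[C]_(d2 * d3, q)) : exists Ty, ymx Ty = B.
Proof.
exists (fun k j t => B (mxtens_index (k, j)) t); apply/matrixP => l t.
by case: (mxtens_indexP l) => k j; rewrite mxE mxtens_indexK.
Qed.

Lemma beta3E r1 r2 Tx Ty : @beta3 C d1 d2 d3 r1 r2 Tx Ty = (contract_mx (xmx Tx) (ymx Ty))^T.
Proof.
apply/matrixP => I J; case: (mxtens_indexP I) => i t; case: (mxtens_indexP J) => s j.
rewrite !mxE !unpairE !mxtens_indexK /= (@sum_mxtens_index _ (d1 * d2)%N d3) sum_mxtens_index.
rewrite [RHS](bigD1 i) //= [X in _ + X]big1 ?addr0; last first.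
  by move=> i' /negbTE ne_i'i; do 2!apply: big1 => ? _; rewrite idtensE ne_i'i mul0r mulr0.
apply: eq_bigr => k _; rewrite [RHS](bigD1 j) //= [X in _ + X]big1 ?addr0; last first.
  by move=> j' /negbTE ne_j'j; rewrite tensmxE [1%:M _ _]mxE eq_sym ne_j'j mulr0 mul0r.
by rewrite tensmxE idtensE !mxE !mxtens_indexK /= !eqxx mulr1 mul1r.
Qed.

End Network.

Section Duality.
Variables (C : numClosedFieldType) (d1 d2 d3 r1 r2 : nat).
Local Notation a := (d1 * d2 - r1)%N.

Lemma orth_projector_contract (P1 : 'M[C]_(d1 * d2)) (P2 : 'M[C]_(d2 * d3)) :
  orth_projector P1 r1 -> orth_projector P2 r2 ->
  exists (A : 'M[C]_(a, d1 * d2)) (B : 'M[C]_(d2 * d3, r2)),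
    [/\ (A :=: kermx P1)%MS, exists W, P2 = B *m W &
        (\rank (contract_mx A B) + \rank (kermx (H3 P1 P2)) = a * d3)%N].
Proof.
move=> P1r1 P2r2; have [_ [_ rkP1]] := P1r1; have [_ [_ rkP2]] := P2r2.
have [A eqA freeA] : exists2 A : 'M[C]_(a, d1 * d2), (A :=: kermx P1)%MS & row_free A.
  by apply: row_basis; rewrite mxrank_ker rkP1.
have [B [W [Z [eP2 eB]]]] := col_basis rkP2.
exists A, B; split=> //; first by exists W.
exact: rank_contract_add_ker (orth_projector_idem P1r1) (orth_projector_idem P2r2) eqA freeA eP2 eB.
Qed.

Lemma GQSAT3_QMF3 k : GQSAT3_values C d1 d2 d3 r1 r2 k ->
  exists2 q, QMF3_values C d1 d2 d3 r1 r2 q & (q + k = a * d3)%N.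
Proof.
case=> P1 [P2 [P1r1 [P2r2 <-]]].
have [A [B [_ _ rk]]] := orth_projector_contract P1r1 P2r2.
have [Tx eA] := xmx_onto A; have [Ty eB] := ymx_onto B.
by exists (\rank (beta3 Tx Ty)); [exists Tx, Ty | rewrite beta3E mxrank_tr eA eB].
Qed.

Hypotheses (lt_r1 : (r1 < d1 * d2)%N) (le_r2 : (r2 <= d2 * d3)%N).

Lemma QMF3_GQSAT3 q : QMF3_values C d1 d2 d3 r1 r2 q ->
  exists2 k, GQSAT3_values C d1 d2 d3 r1 r2 k & (q + k <= a * d3)%N.
Proof.
case=> Tx [Ty <-]; rewrite beta3E mxrank_tr.
have [P' P'a xP'] : exists2 P', orth_projector P' a & (xmx Tx <= P')%MS.
  by apply: orth_projector_sup; rewrite rank_leq_row leq_subr.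
have P1r1 : orth_projector (1%:M - P') r1.
  by rewrite -[r1](subKn (ltnW lt_r1)); exact: orth_projector_compl.
have [P Pr2 yP] : exists2 P, orth_projector P r2 & ((ymx Ty)^T <= P)%MS.
  by apply: orth_projector_sup; rewrite rank_leq_row le_r2.
have P2r2 := orth_projector_tr Pr2.
have [A [B [eqA [W eP] rk]]] := orth_projector_contract P1r1 P2r2.
exists (\rank (kermx (H3 (1%:M - P') P^T))); first by exists (1%:M - P'), P^T.
apply: leq_trans (eq_leq rk); rewrite leq_add2r; case/submxP: yP => D eD.
apply: (rank_contract_mono (Z := W *m D^T)).
  case/submxP: xP' => E ->; rewrite eqA; apply/sub_kermxP.
  by rewrite mulmxBr mulmx1 -mulmxA (proj1 P'a) subrr.
by rewrite -[ymx Ty]trmxK eD trmx_mul eP mulmxA.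
Qed.

End Duality.

Lemma is_min_exists (P : nat -> Prop) n0 : P n0 -> exists n, is_min P n.
Proof.
elim/ltn_ind: n0 => n0 IHn0 Pn0.
have [[m lt_mn0 Pm] | no_lt] := classic (exists2 m, (m < n0)%N & P m); first exact: IHn0 Pm.
exists n0; split=> // m Pm; rewrite leqNgt; apply/negP => lt_mn0; by apply: no_lt; exists m.
Qed.

Lemma is_max_exists (P : nat -> Prop) b n0 :
  P n0 -> (forall n, P n -> n <= b)%N -> exists n, is_max P n.
Proof.
move=> Pn0 leb; have [|k [Pk mink]] := @is_min_exists (fun k => P (b - k)%N) (b - n0)%N.
  by rewrite subKn ?leb.
exists (b - k)%N; split=> // m Pm.
by rewrite -(subKn (leb _ Pm)) leq_sub2l // mink // subKn ?leb.
Qed.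

Theorem claim6p1 (C : numClosedFieldType) (d1 d2 d3 r1 r2 : nat)
  (hd1 : (0 < d1)%N) (hd2 : (0 < d2)%N) (hd3 : (0 < d3)%N)
  (hr1pos : (0 < r1)%N) (hr2pos : (0 < r2)%N)
  (hr1 : (r1 < d1 * d2)%N) (hr2 : (r2 <= d2 * d3)%N) :
  exists g q : nat,
    is_min (GQSAT3_values C d1 d2 d3 r1 r2) g /\
    is_max (QMF3_values C d1 d2 d3 r1 r2) q /\
    (g%:Z = (d3 * (d1 * d2 - r1))%:Z - q%:Z)%R.
Proof.
pose Tx0 (s : 'I_(d1 * d2 - r1)) (i : 'I_d1) (k : 'I_d2) : C := 0.
pose Ty0 (k : 'I_d2) (j : 'I_d3) (t : 'I_r2) : C := 0.
have Q0 : QMF3_values C d1 d2 d3 r1 r2 (\rank (beta3 Tx0 Ty0)) by exists Tx0, Ty0.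
have [k0 Gk0 _] := QMF3_GQSAT3 hr1 hr2 Q0.
have [g [Gg ming]] := is_min_exists Gk0.
have [q [Qq maxq]] : exists q, is_max (QMF3_values C d1 d2 d3 r1 r2) q.
  apply: is_max_exists Q0 _ => q /(QMF3_GQSAT3 hr1 hr2)[k _ le_qk].
  exact: leq_trans (leq_addr k q) le_qk.
exists g, q; split=> //; split=> //.
have [q' Qq' eq_q'g] := GQSAT3_QMF3 Gg.
have [k Gk le_qk] := QMF3_GQSAT3 hr1 hr2 Qq.
have le_q'q := maxq _ Qq'; have le_gk := ming _ Gk.
have eq_gq : (g + q = d3 * (d1 * d2 - r1))%N by rewrite mulnC; lia.
by rewrite -eq_gq PoszD addrK.
Qed.
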